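(* Let $\lambda>0$, $\gamma>0$, and let $\beta_1=\beta_1(\gamma)$ be the unique positive solution of $\frac{\sqrt\pi}{2}\gamma x(1+x)^{1/2}(3+x)=1$. Let $X$ be the Banach space of bounded analytic functions $h:[0,\lambda]\to\mathbb{R}$ with the supremum norm $\|\cdot\|_\infty$, $K=\{h\in X: h\ge 0,\ \|h\|_\infty\le 1\}$, and for $\beta\ge0$ and $h\in K$ let $\Psi_h=1+\beta h$, $$D_h=\gamma\left(1+\gamma\int_0^\lambda\frac{\exp\left(-2\int_0^x\frac{\xi}{\Psi_h(\xi)}d\xi\right)}{\Psi_h(x)}\,dx\right)^{-1},$$ $$(\tau h)(\eta)=D_h\left(\frac1\gamma+\int_0^\eta\frac{\exp\left(-2\int_0^x\frac{\xi}{\Psi_h(\xi)}d\xi\right)}{\Psi_h(x)}\,dx\right),\quad 0<\eta<\lambda.$$ If $0\le\beta<\beta_1$, then $\tau$ is a contraction on $(K,\|\cdot\|_\infty)$. *)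

From Stdlib Require Import Reals Lra.
From Coquelicot Require Import Coquelicot.
Open Scope R_scope.

Definition analytic_on (a b : R) (h : R -> R) : Prop :=
  forall x0, a <= x0 <= b ->
    exists (c : nat -> R) (r : R), 0 < r /\
      forall x, a <= x <= b -> Rabs (x - x0) < r -> is_pseries c (x - x0) (h x).

Definition inX (lambda : R) (h : R -> R) : Prop :=
  analytic_on 0 lambda h /\
  exists M, forall x, 0 <= x <= lambda -> Rabs (h x) <= M.

Definition inK (lambda : R) (h : R -> R) : Prop :=
  inX lambda h /\ forall x, 0 <= x <= lambda -> 0 <= h x /\ Rabs (h x) <= 1.

Definition Psi (beta : R) (h : R -> R) (x : R) : R := 1 + beta * h x.

Definition G (beta : R) (h : R -> R) (x : R) : R :=
  exp (-2 * RInt (fun xi => xi / Psi beta h xi) 0 x) / Psi beta h x.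

Definition D (gamma lambda beta : R) (h : R -> R) : R :=
  gamma * / (1 + gamma * RInt (G beta h) 0 lambda).

Definition tau (gamma lambda beta : R) (h : R -> R) (eta : R) : R :=
  D gamma lambda beta h * (1 / gamma + RInt (G beta h) 0 eta).

(* Writing A(x) and B(x) for the integrals of G_h over [0, x] and [x, lambda], one has
   tau h (x) = (1 + gamma A(x)) / (1 + gamma (A(x) + B(x))), a number in [0, 1].  Functions
   given near every point of [0, lambda] by a convergent power series are closed under sums,
   products, reciprocals of non-vanishing functions, exp and integration (the coefficients of
   1/f and exp f are built by course-of-values recursion and bounded geometrically), so tau h
   is again analytic.  For the contraction, 1 <= Psi_h <= 1 + beta yields
   |G_h1 - G_h2| <= beta ||h1 - h2|| exp (-x^2/(1+beta)) (1 + x^2), while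
   (A, B) |-> (1 + gamma A) / (1 + gamma (A + B)) is gamma-Lipschitz for |dA| + |dB| on
   nonnegative arguments.  The weight integrates to at most (3/4) (3 + beta) sqrt (1 + beta),
   and since 3/4 < sqrt pi / 2 the resulting factor is < 1 exactly when beta < beta1. *)

From Pilot Require Import Defs.
From Stdlib Require Import Reals Lra Lia Arith.
From Coquelicot Require Import Coquelicot.
Open Scope R_scope.

(** * Power series *)

Lemma CV_radius_ge_of_bounded (c : nat -> R) (r M : R) :
  (forall n, Rabs (c n * r ^ n) <= M) -> Rbar_le r (CV_radius c).
Proof. intros H. apply (proj1 (CV_radius_bounded c)). now exists M. Qed.

Lemma CV_radius_ge_of_geom_bound (c : nat -> R) (C B : R) : 0 < B ->
  (forall n, Rabs (c n) <= C * B ^ n) -> Rbar_le (/ B) (CV_radius c).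
Proof.
  intros HB Hc. apply (CV_radius_ge_of_bounded c _ C). intros n.
  assert (0 < B ^ n) by (apply pow_lt; lra).
  rewrite Rabs_mult, <- RPow_abs, Rabs_inv, (Rabs_pos_eq B), pow_inv by lra.
  replace C with (C * B ^ n * / B ^ n) by (field; lra).
  apply Rmult_le_compat_r; [apply Rlt_le, Rinv_0_lt_compat; lra| apply Hc].
Qed.

Lemma CV_disk_le_radius (c : nat -> R) (x : R) : CV_disk c x -> Rbar_le (Rabs x) (CV_radius c).
Proof.
  intros H. apply (proj1 (Lub_Rbar_correct (CV_disk c))).
  apply CV_disk_le with x; [rewrite Rabs_Rabsolu; lra| exact H].
Qed.

Lemma term_le_Series (u : nat -> R) (n : nat) :
  (forall k, 0 <= u k) -> ex_series u -> u n <= Series u.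
Proof.
  intros Hu [l Hl]. rewrite (is_series_unique _ _ Hl).
  apply is_series_Reals in Hl.
  apply Rle_trans with (sum_f_R0 u n); [| apply sum_incr; assumption].
  destruct n as [|n]; simpl; [lra|]. pose proof (cond_pos_sum u n Hu). lra.
Qed.

Lemma CV_radius_pos_geom_bound (a : nat -> R) : Rbar_lt 0 (CV_radius a) ->
  exists A R, 0 <= A /\ 0 < R /\ forall n, Rabs (a n) <= A * R ^ n.
Proof.
  intros Hr.
  assert (exists rho, 0 < rho /\ Rbar_lt (Rabs rho) (CV_radius a)) as [rho [Hrho Hlt]].
  { destruct (CV_radius a) as [r| |]; simpl in Hr; [| exists 1; simpl; lra| contradiction].
    exists (r / 2). rewrite Rabs_pos_eq by lra. simpl. lra. }
  set (u n := Rabs (a n * rho ^ n)).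
  assert (Hu : forall n, u n <= Series u)
    by (intros n; apply term_le_Series; [intros; apply Rabs_pos| apply CV_disk_inside, Hlt]).
  exists (Series u), (/ rho). repeat split.
  - apply Rle_trans with (u O); [apply Rabs_pos| apply Hu].
  - apply Rinv_0_lt_compat, Hrho.
  - intros n. assert (0 < rho ^ n) by (apply pow_lt; lra).
    specialize (Hu n). unfold u at 1 in Hu.
    rewrite Rabs_mult, (Rabs_pos_eq (rho ^ n)) in Hu by lra.
    rewrite pow_inv. apply Rmult_le_reg_r with (rho ^ n); [lra|].
    rewrite Rmult_assoc, Rinv_l by lra. lra.
Qed.

Definition strong_seq (step : nat -> (nat -> R) -> R) : nat -> R :=
  Fix lt_wf (fun _ => R)
    (fun n rec => step n (fun k => match lt_dec k n with left Hk => rec k Hk | right _ => 0 end)).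

Lemma strong_seq_eq (step : nat -> (nat -> R) -> R) :
  (forall n f g, (forall k, (k < n)%nat -> f k = g k) -> step n f = step n g) ->
  forall n, strong_seq step n = step n (strong_seq step).
Proof.
  intros Hstep n. unfold strong_seq at 1. rewrite Fix_eq.
  - apply Hstep. intros k Hk. destruct lt_dec; [reflexivity| contradiction].
  - intros m f g Hfg. apply Hstep. intros k _. destruct lt_dec; [apply Hfg| reflexivity].
Qed.

Lemma sum_pow_S_le (q : R) (m : nat) : 0 <= q <= / 2 -> sum_f_R0 (fun k => q ^ S k) m <= 2 * q.
Proof.
  intros Hq.
  rewrite (sum_eq _ (fun k => q ^ k * q)) by (intros; simpl; ring).
  rewrite <- scal_sum, tech3 by lra.
  assert (0 <= q ^ S m) by (apply pow_le; lra).
  rewrite (Rmult_comm 2 q). apply Rmult_le_compat_l; [lra|].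
  apply Rmult_le_reg_r with (1 - q); [lra|].
  unfold Rdiv. rewrite Rmult_assoc, Rinv_l by lra. nra.
Qed.

Lemma convolution_recurrence_geom_bound (s : nat -> R) (A R C : R) :
  0 <= A -> 0 < R -> Rabs (s O) <= C ->
  (forall m, Rabs (s (S m)) <= A * sum_f_R0 (fun k => R ^ S k * Rabs (s (m - k)%nat)) m) ->
  forall n, Rabs (s n) <= C * (2 * R * (1 + A)) ^ n.
Proof.
  intros HA HR H0 Hrec. set (B := 2 * R * (1 + A)).
  assert (HB : 0 < B) by (unfold B; nra).
  assert (HC : 0 <= C) by (pose proof (Rabs_pos (s O)); lra).
  (* the weights A q^(k+1), q = R / B, sum to at most A / (1 + A) < 1 *)
  set (q := R / B).
  assert (Hq : q = / (2 * (1 + A))) by (unfold q, B; field; lra).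
  assert (Hq2 : 0 <= q <= / 2).
  { rewrite Hq. split; [apply Rlt_le, Rinv_0_lt_compat; lra| apply Rinv_le_contravar; lra]. }
  intros n. induction n as [[|m] IH] using lt_wf_ind; [simpl; lra|].
  eapply Rle_trans; [apply Hrec|].
  apply Rle_trans with (A * sum_f_R0 (fun k => q ^ S k * (C * B ^ S m)) m).
  - apply Rmult_le_compat_l; [lra|]. apply sum_Rle. intros k Hk.
    replace (q ^ S k * (C * B ^ S m)) with (R ^ S k * (C * B ^ (m - k))).
    + apply Rmult_le_compat_l; [apply pow_le; lra| apply IH; lia].
    + replace (S m) with ((m - k) + S k)%nat by lia.
      unfold q, Rdiv. rewrite pow_add, Rpow_mult_distr, pow_inv.
      field. apply pow_nonzero. lra.
  - rewrite <- scal_sum.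
    assert (0 <= C * B ^ S m) by (apply Rmult_le_pos; [lra| apply pow_le; lra]).
    pose proof (sum_pow_S_le q m Hq2).
    assert (A * (2 * q) <= 1).
    { rewrite Hq. apply Rmult_le_reg_r with (1 + A); [lra|].
      replace (A * (2 * / (2 * (1 + A))) * (1 + A)) with A by (field; lra). lra. }
    assert (0 <= A * (C * B ^ S m)) by (apply Rmult_le_pos; lra).
    nra.
Qed.

Lemma convolution_recurrence_radius (s : nat -> R) (A R : R) : 0 <= A -> 0 < R ->
  (forall m, Rabs (s (S m)) <= A * sum_f_R0 (fun k => R ^ S k * Rabs (s (m - k)%nat)) m) ->
  exists r, 0 < r /\ Rbar_le r (CV_radius s).
Proof.
  intros HA HR Hrec. exists (/ (2 * R * (1 + A))).
  split; [apply Rinv_0_lt_compat; nra|].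
  apply (CV_radius_ge_of_geom_bound _ (Rabs (s O))); [nra|].
  apply convolution_recurrence_geom_bound; [assumption| assumption| lra| assumption].
Qed.

(** * Functions analytic on [0, lambda] *)

Definition analytic_at (lam : R) (f : R -> R) (x0 : R) : Prop :=
  exists (c : nat -> R) (r : R), 0 < r /\ Rbar_le r (CV_radius c) /\
    forall x, 0 <= x <= lam -> Rabs (x - x0) < r -> f x = PSeries c (x - x0).

Lemma lt_CV_radius (c : nat -> R) (r t : R) :
  Rbar_le r (CV_radius c) -> Rabs t < r -> Rbar_lt (Rabs t) (CV_radius c).
Proof. intros Hc Ht. now apply Rbar_lt_le_trans with r. Qed.

Lemma in_interval_between (lam a b z : R) : 0 <= a <= lam -> 0 <= b <= lam ->
  Rmin a b <= z <= Rmax a b -> 0 <= z <= lam.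
Proof. unfold Rmin, Rmax. destruct Rle_dec; lra. Qed.

Lemma analytic_at_of_analytic_on (lam : R) (h : R -> R) (x0 : R) :
  0 < lam -> analytic_on 0 lam h -> 0 <= x0 <= lam -> analytic_at lam h x0.
Proof.
  intros Hl Ha Hx0. destruct (Ha x0 Hx0) as (c & r & Hr & Hc).
  set (s := Rmin (r / 2) (lam / 2)).
  assert (Hs : 0 < s) by (apply Rmin_glb_lt; lra).
  assert (Hs1 : s <= r / 2) by apply Rmin_l.
  assert (Hs2 : s <= lam / 2) by apply Rmin_r.
  (* convergence at a point of [0, lam] at distance s from x0 bounds the radius below by s *)
  assert (exists x1, 0 <= x1 <= lam /\ Rabs (x1 - x0) = s) as [x1 [Hx1 Hd]].
  { destruct (Rle_dec x0 (lam / 2)); [exists (x0 + s)| exists (x0 - s)]; split; try lra;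
      [replace (x0 + s - x0) with s by ring| replace (x0 - s - x0) with (- s) by ring;
       rewrite Rabs_Ropp]; apply Rabs_pos_eq; lra. }
  exists c, s. repeat split; [exact Hs| |].
  - apply Rbar_not_lt_le. intros Hlt. rewrite <- Hd in Hlt.
    apply (CV_disk_outside _ _ Hlt), ex_series_lim_0.
    exists (h x1). eapply is_series_ext; [| apply (Hc x1 Hx1); lra].
    intros n. rewrite pow_n_pow. apply Rmult_comm.
  - intros x Hx Hxs. symmetry. apply is_pseries_unique, Hc; [exact Hx| lra].
Qed.

Lemma analytic_on_of_analytic_at (lam : R) (f : R -> R) :
  (forall x0, 0 <= x0 <= lam -> analytic_at lam f x0) -> analytic_on 0 lam f.
Proof.
  intros Hf x0 Hx0. destruct (Hf x0 Hx0) as (c & r & Hr & Hc & Heq).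
  exists c, r. split; [exact Hr|]. intros x Hx Hxr. rewrite Heq by assumption.
  apply PSeries_correct, CV_radius_inside, (lt_CV_radius _ r); assumption.
Qed.

Lemma analytic_at_ext_loc (lam : R) (f g : R -> R) (x0 d : R) : 0 < d ->
  (forall x, 0 <= x <= lam -> Rabs (x - x0) < d -> f x = g x) ->
  analytic_at lam f x0 -> analytic_at lam g x0.
Proof.
  intros Hd Hfg (c & r & Hr & Hc & Heq). exists c, (Rmin r d).
  pose proof (Rmin_l r d). pose proof (Rmin_r r d). repeat split.
  - now apply Rmin_glb_lt.
  - apply Rbar_le_trans with r; [simpl; lra| exact Hc].
  - intros x Hx Hxr. rewrite <- Hfg by (auto; lra). apply Heq; auto; lra.
Qed.

Definition PS_const (k : R) (n : nat) : R := match n with O => k | S _ => 0 end.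

Lemma CV_radius_PS_const (k r : R) : Rbar_le r (CV_radius (PS_const k)).
Proof.
  apply (CV_radius_ge_of_bounded _ _ (Rabs k)).
  intros [|n]; simpl; rewrite ?Rmult_1_r, ?Rmult_0_l, ?Rabs_R0; [lra| apply Rabs_pos].
Qed.

Lemma PSeries_PS_const (k t : R) : PSeries (PS_const k) t = k.
Proof.
  rewrite PSeries_decr_1.
  - rewrite (PSeries_ext _ (fun _ => 0)) by reflexivity.
    rewrite PSeries_const_0. simpl. ring.
  - apply CV_radius_inside, (lt_CV_radius _ (Rabs t + 1)); [apply CV_radius_PS_const| lra].
Qed.

Lemma analytic_at_const (lam k x0 : R) : analytic_at lam (fun _ => k) x0.
Proof.
  exists (PS_const k), 1. repeat split; [lra| apply CV_radius_PS_const|].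
  intros. symmetry. apply PSeries_PS_const.
Qed.

Lemma analytic_at_plus (lam : R) (f g : R -> R) (x0 : R) :
  analytic_at lam f x0 -> analytic_at lam g x0 -> analytic_at lam (fun x => f x + g x) x0.
Proof.
  intros (a & r1 & Hr1 & Ha & Hf) (b & r2 & Hr2 & Hb & Hg).
  pose proof (Rmin_l r1 r2). pose proof (Rmin_r r1 r2). set (r := Rmin r1 r2) in *.
  assert (Hra : Rbar_le r (CV_radius a)) by (apply Rbar_le_trans with r1; [simpl; lra| exact Ha]).
  assert (Hrb : Rbar_le r (CV_radius b)) by (apply Rbar_le_trans with r2; [simpl; lra| exact Hb]).
  exists (PS_plus a b), r. repeat split.
  - now apply Rmin_glb_lt.
  - apply Rbar_le_trans with (Rbar_min (CV_radius a) (CV_radius b)); [| apply CV_radius_plus].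
    now apply Rbar_min_case.
  - intros x Hx Hxr.
    rewrite PSeries_plus by (apply CV_radius_inside, (lt_CV_radius _ r); assumption).
    rewrite Hf, Hg by (auto; lra). reflexivity.
Qed.

Lemma CV_disk_mult (a b : nat -> R) (y : R) : Rbar_lt (Rabs y) (CV_radius a) ->
  Rbar_lt (Rabs y) (CV_radius b) -> CV_disk (PS_mult a b) y.
Proof.
  intros Ha Hb.
  (* dominate by the product of the series of absolute values *)
  assert (Habs : forall c, CV_radius (fun n => Rabs (c n)) = CV_radius c).
  { intros c. unfold CV_radius. apply Lub_Rbar_eqset. intros x. unfold CV_disk.
    split; apply ex_series_ext; intros n; rewrite !Rabs_mult, Rabs_Rabsolu; reflexivity. }
  assert (H : ex_pseries (PS_mult (fun n => Rabs (a n)) (fun n => Rabs (b n))) (Rabs y))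
    by (apply ex_pseries_mult; rewrite Habs, Rabs_Rabsolu; assumption).
  refine (@ex_series_le R_AbsRing R_CompleteNormedModule _ _ _ H).
  intros n. change norm with Rabs. simpl. rewrite Rabs_Rabsolu, <- pow_n_pow.
  change scal with Rmult. simpl.
  rewrite Rabs_mult, <- RPow_abs, Rmult_comm. apply Rmult_le_compat_l; [apply pow_le, Rabs_pos|].
  unfold PS_mult. eapply Rle_trans; [apply sum_f_R0_triangle|].
  right. apply sum_eq. intros i _. apply Rabs_mult.
Qed.

Lemma analytic_at_mult (lam : R) (f g : R -> R) (x0 : R) :
  analytic_at lam f x0 -> analytic_at lam g x0 -> analytic_at lam (fun x => f x * g x) x0.
Proof.
  intros (a & r1 & Hr1 & Ha & Hf) (b & r2 & Hr2 & Hb & Hg).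
  pose proof (Rmin_l r1 r2). pose proof (Rmin_r r1 r2). set (r := Rmin r1 r2) in *.
  assert (Hr : 0 < r) by now apply Rmin_glb_lt.
  assert (Hra : Rbar_le r (CV_radius a)) by (apply Rbar_le_trans with r1; [simpl; lra| exact Ha]).
  assert (Hrb : Rbar_le r (CV_radius b)) by (apply Rbar_le_trans with r2; [simpl; lra| exact Hb]).
  exists (PS_mult a b), (r / 2). repeat split.
  - lra.
  - replace (r / 2) with (Rabs (r / 2)) by (apply Rabs_pos_eq; lra).
    apply CV_disk_le_radius, CV_disk_mult;
      apply (lt_CV_radius _ r); try assumption; rewrite Rabs_pos_eq; lra.
  - intros x Hx Hxr.
    rewrite PSeries_mult by (apply (lt_CV_radius _ r); [assumption| lra]).
    rewrite Hf, Hg by (auto; lra). reflexivity.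
Qed.

Lemma analytic_at_scal (lam k : R) (f : R -> R) (x0 : R) :
  analytic_at lam f x0 -> analytic_at lam (fun x => k * f x) x0.
Proof. apply analytic_at_mult, analytic_at_const. Qed.

(* [ex_RInt_continuous] needs continuity on all of R, while f is only known on [0, lam];
   f (clamp lam y) agrees with f there and inherits continuity from analyticity. *)
Definition clamp (lam x : R) : R := Rmax 0 (Rmin lam x).

Lemma clamp_in (lam x : R) : 0 <= lam -> 0 <= clamp lam x <= lam.
Proof. unfold clamp, Rmax, Rmin. repeat destruct Rle_dec; lra. Qed.

Lemma clamp_id (lam x : R) : 0 <= x <= lam -> clamp lam x = x.
Proof. unfold clamp, Rmax, Rmin. repeat destruct Rle_dec; lra. Qed.

Lemma clamp_1_lipschitz (lam x y : R) : 0 <= lam ->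
  Rabs (clamp lam x - clamp lam y) <= Rabs (x - y).
Proof. unfold clamp, Rmax, Rmin, Rabs. repeat destruct Rle_dec; repeat destruct Rcase_abs; lra. Qed.

Lemma continuous_clamp (lam x : R) : 0 <= lam -> continuous (clamp lam) x.
Proof.
  intros Hl. apply continuity_pt_filterlim. intros eps Heps. exists eps.
  split; [exact Heps|]. intros y [_ Hy]. simpl in *. unfold R_dist in *.
  eapply Rle_lt_trans; [apply clamp_1_lipschitz|]; assumption.
Qed.

Lemma analytic_at_continuous_clamp (lam : R) (f : R -> R) (z : R) : 0 <= lam -> 0 <= z <= lam ->
  analytic_at lam f z -> continuous (fun y => f (clamp lam y)) z.
Proof.
  intros Hl Hz (c & r & Hr & Hc & Heq).
  apply continuous_ext_loc with (fun y => PSeries c (clamp lam y - z)).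
  - exists (mkposreal r Hr). intros y Hy. change (Rabs (y - z) < r) in Hy.
    symmetry. apply Heq; [now apply clamp_in|].
    rewrite <- (clamp_id lam z Hz) at 1.
    eapply Rle_lt_trans; [apply clamp_1_lipschitz|]; assumption.
  - apply continuous_comp with (f := fun y => clamp lam y - z).
    + apply (continuous_minus (clamp lam) (fun _ => z));
        [now apply continuous_clamp| apply continuous_const].
    + rewrite clamp_id, Rminus_diag by exact Hz.
      apply continuity_pt_filterlim, PSeries_continuity, (lt_CV_radius _ r); [exact Hc|].
      rewrite Rabs_R0. exact Hr.
Qed.

Lemma ex_RInt_analytic (lam : R) (f : R -> R) (a b : R) : 0 <= lam ->
  (forall y, 0 <= y <= lam -> analytic_at lam f y) ->
  0 <= a <= lam -> 0 <= b <= lam -> ex_RInt f a b.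
Proof.
  intros Hl Hf Ha Hb.
  apply ex_RInt_ext with (fun y => f (clamp lam y)).
  - intros x Hx. rewrite clamp_id; [reflexivity|].
    apply (in_interval_between lam a b); [assumption| assumption| lra].
  - apply (@ex_RInt_continuous R_CompleteNormedModule). intros z Hz.
    assert (Hz' : 0 <= z <= lam) by now apply (in_interval_between lam a b).
    now apply analytic_at_continuous_clamp, Hf.
Qed.

Lemma analytic_at_RInt (lam : R) (f : R -> R) (x0 : R) : 0 <= lam ->
  (forall y, 0 <= y <= lam -> analytic_at lam f y) -> 0 <= x0 <= lam ->
  analytic_at lam (fun x => RInt f 0 x) x0.
Proof.
  intros Hl Hf Hx0. destruct (Hf x0 Hx0) as (c & r & Hr & Hc & Heq).
  apply analytic_at_ext_loc with (fun x => RInt f 0 x0 + PSeries (PS_Int c) (x - x0)) r;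
    [exact Hr| |].
  - intros x Hx Hxr.
    rewrite <- (RInt_Chasles f 0 x0 x) by (apply (ex_RInt_analytic lam); auto; lra).
    change plus with Rplus. f_equal.
    assert (Hlt : Rbar_lt (Rabs (x - x0)) (CV_radius c)) by now apply (lt_CV_radius _ r).
    rewrite <- RInt_PSeries by exact Hlt.
    assert (Hex : ex_RInt (PSeries c) (1 * x0 + - x0) (1 * x + - x0)).
    { replace (1 * x0 + - x0) with 0 by ring. replace (1 * x + - x0) with (x - x0) by ring.
      now apply ex_RInt_PSeries. }
    pose proof (@RInt_comp_lin R_CompleteNormedModule (PSeries c) 1 (- x0) x0 x Hex) as E.
    replace (1 * x0 + - x0) with 0 in E by ring. replace (1 * x + - x0) with (x - x0) in E by ring.
    rewrite <- E. apply RInt_ext. intros y Hy.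
    change (scal 1 ?v) with (1 * v). rewrite Rmult_1_l.
    replace (1 * y + - x0) with (y - x0) by ring. symmetry. apply Heq.
    + apply (in_interval_between lam x0 x); [assumption| assumption| lra].
    + apply Rle_lt_trans with (Rabs (x - x0)); [| exact Hxr].
      unfold Rmin, Rmax in Hy. destruct Rle_dec; unfold Rabs; repeat destruct Rcase_abs; lra.
  - apply analytic_at_plus; [apply analytic_at_const|].
    exists (PS_Int c), r. split; [exact Hr| split; [now rewrite CV_radius_Int| reflexivity]].
Qed.

Lemma analytic_at_id (lam y : R) : 0 <= lam -> 0 <= y <= lam -> analytic_at lam (fun x => x) y.
Proof.
  intros Hl Hy. apply analytic_at_ext_loc with (fun x => RInt (fun _ => 1) 0 x) 1; [lra| |].
  - intros x _ _. rewrite RInt_const. change (scal (x - 0) 1) with ((x - 0) * 1). ring.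
  - apply analytic_at_RInt; [assumption| intros; apply analytic_at_const| assumption].
Qed.

Definition PS_inv_step (p : nat -> R) (n : nat) (w : nat -> R) : R :=
  match n with
  | O => / p O
  | S m => - / p O * sum_f_R0 (fun k => p (S k) * w (m - k)%nat) m
  end.

Definition PS_inv (p : nat -> R) : nat -> R := strong_seq (PS_inv_step p).

Lemma PS_inv_eq (p : nat -> R) (n : nat) : PS_inv p n = PS_inv_step p n (PS_inv p).
Proof.
  apply strong_seq_eq. intros [|m] f g Hfg; [reflexivity|]. simpl.
  f_equal. apply sum_eq. intros k Hk. rewrite Hfg by lia. reflexivity.
Qed.

Lemma PS_mult_PS_inv (p : nat -> R) (n : nat) : p O <> 0 ->
  PS_mult p (PS_inv p) n = PS_const 1 n.
Proof.
  intros Hp. unfold PS_mult. destruct n as [|m].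
  - simpl. rewrite PS_inv_eq. simpl. field. exact Hp.
  - rewrite decomp_sum by lia. simpl pred.
    rewrite (sum_eq _ (fun k => p (S k) * PS_inv p (m - k)%nat)) by reflexivity.
    replace (S m - 0)%nat with (S m) by lia. rewrite (PS_inv_eq p (S m)). simpl. field. exact Hp.
Qed.

Lemma CV_radius_PS_inv (p : nat -> R) : p O <> 0 -> Rbar_lt 0 (CV_radius p) ->
  exists r, 0 < r /\ Rbar_le r (CV_radius (PS_inv p)).
Proof.
  intros Hp0 Hp. destruct (CV_radius_pos_geom_bound p Hp) as (A & R & HA & HR & Hb).
  assert (Hpa : 0 < / Rabs (p O)) by (apply Rinv_0_lt_compat, Rabs_pos_lt, Hp0).
  apply (convolution_recurrence_radius _ (A * / Rabs (p O)) R); [nra| exact HR|].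
  intros m. rewrite PS_inv_eq. cbn [PS_inv_step]. rewrite Rabs_mult, Rabs_Ropp, Rabs_inv.
  eapply Rle_trans; [apply Rmult_le_compat_l; [lra| apply sum_f_R0_triangle]|].
  rewrite (Rmult_comm A), Rmult_assoc. apply Rmult_le_compat_l; [lra|].
  rewrite scal_sum. apply sum_Rle. intros k _. rewrite Rabs_mult.
  replace (R ^ S k * Rabs (PS_inv p (m - k)%nat) * A)
    with (A * R ^ S k * Rabs (PS_inv p (m - k)%nat)) by ring.
  apply Rmult_le_compat_r; [apply Rabs_pos| apply Hb].
Qed.

Lemma analytic_at_inv (lam : R) (f : R -> R) (x0 : R) : 0 <= x0 <= lam ->
  analytic_at lam f x0 -> f x0 <> 0 -> analytic_at lam (fun x => / f x) x0.
Proof.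
  intros Hx0 (p & r & Hr & Hp & Heq) Hnz.
  assert (Hp0 : p O = f x0).
  { rewrite Heq, Rminus_diag, PSeries_0; [reflexivity| exact Hx0|].
    rewrite Rminus_diag, Rabs_R0. exact Hr. }
  rewrite <- Hp0 in Hnz.
  destruct (CV_radius_PS_inv p Hnz) as (rw & Hrw & Hw); [now apply Rbar_lt_le_trans with r|].
  pose proof (Rmin_l r rw). pose proof (Rmin_r r rw).
  exists (PS_inv p), (Rmin r rw). repeat split.
  - now apply Rmin_glb_lt.
  - apply Rbar_le_trans with rw; [simpl; lra| exact Hw].
  - intros x Hx Hxr. rewrite Heq by (auto; lra).
    assert (E : PSeries p (x - x0) * PSeries (PS_inv p) (x - x0) = 1).
    { rewrite <- PSeries_mult by
        (first [apply (lt_CV_radius _ r); [exact Hp| lra]|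
                apply (lt_CV_radius _ rw); [exact Hw| lra]]).
      rewrite (PSeries_ext _ (PS_const 1)) by (intros; now apply PS_mult_PS_inv).
      apply PSeries_PS_const. }
    assert (PSeries p (x - x0) <> 0) by (intros Hz; rewrite Hz in E; lra).
    rewrite <- (Rmult_1_l (/ _)), <- E. field. assumption.
Qed.

Definition PS_exp_step (a : nat -> R) (n : nat) (s : nat -> R) : R :=
  match n with
  | O => exp (a O)
  | S m => sum_f_R0 (fun k => PS_derive a k * s (m - k)%nat) m / INR (S m)
  end.

(* The coefficients of exp (PSeries a), determined by s' = a' s and s(0) = exp (a 0). *)
Definition PS_exp (a : nat -> R) : nat -> R := strong_seq (PS_exp_step a).

Lemma PS_exp_eq (a : nat -> R) (n : nat) : PS_exp a n = PS_exp_step a n (PS_exp a).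
Proof.
  apply strong_seq_eq. intros [|m] f g Hfg; [reflexivity|]. simpl.
  f_equal. apply sum_eq. intros k Hk. rewrite Hfg by lia. reflexivity.
Qed.

Lemma PS_derive_PS_exp (a : nat -> R) (n : nat) :
  PS_derive (PS_exp a) n = PS_mult (PS_derive a) (PS_exp a) n.
Proof.
  unfold PS_derive at 1. rewrite PS_exp_eq. cbn [PS_exp_step].
  unfold PS_mult. field. apply not_0_INR. lia.
Qed.

Lemma CV_radius_PS_exp (a : nat -> R) : Rbar_lt 0 (CV_radius a) ->
  exists r, 0 < r /\ Rbar_le r (CV_radius (PS_exp a)).
Proof.
  intros Ha. rewrite <- CV_radius_derive in Ha.
  destruct (CV_radius_pos_geom_bound _ Ha) as (A & R & HA & HR & Hb).
  assert (HAR : 0 <= A / R) by (apply Rmult_le_pos; [lra| apply Rlt_le, Rinv_0_lt_compat, HR]).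
  apply (convolution_recurrence_radius _ (A / R) R); [exact HAR| exact HR|].
  intros m. rewrite PS_exp_eq. cbn [PS_exp_step].
  assert (HI : 1 <= INR (S m)) by (rewrite S_INR; pose proof (pos_INR m); lra).
  unfold Rdiv at 1. rewrite Rabs_mult, Rabs_inv, (Rabs_pos_eq (INR (S m))) by lra.
  apply Rle_trans with (Rabs (sum_f_R0 (fun k => PS_derive a k * PS_exp a (m - k)%nat) m)).
  { assert (0 < / INR (S m) <= 1)
      by (split; [apply Rinv_0_lt_compat; lra| rewrite <- Rinv_1; apply Rinv_le_contravar; lra]).
    pose proof (Rabs_pos (sum_f_R0 (fun k => PS_derive a k * PS_exp a (m - k)%nat) m)). nra. }
  eapply Rle_trans; [apply sum_f_R0_triangle|].
  rewrite scal_sum. apply sum_Rle. intros k _. rewrite Rabs_mult.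
  replace (R ^ S k * Rabs (PS_exp a (m - k)%nat) * (A / R))
    with (A * R ^ k * Rabs (PS_exp a (m - k)%nat)) by (simpl; field; lra).
  apply Rmult_le_compat_r; [apply Rabs_pos| apply Hb].
Qed.

Lemma eq_of_is_derive_0 (F : R -> R) (r t : R) :
  (forall y, Rabs y < r -> is_derive F y 0) -> Rabs t < r -> F t = F 0.
Proof.
  intros HF Ht.
  assert (Hint : is_RInt (fun _ => 0) 0 t (minus (F t) (F 0))).
  { apply (@is_RInt_derive R_CompleteNormedModule); [| intros; apply continuous_const].
    intros y Hy. apply HF. apply Rle_lt_trans with (Rabs t); [| exact Ht].
    unfold Rmin, Rmax in Hy. destruct Rle_dec; unfold Rabs; repeat destruct Rcase_abs; lra. }
  pose proof (is_RInt_unique _ _ _ _ Hint) as E.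
  rewrite RInt_const in E. change (scal (t - 0) 0 = F t - F 0) in E.
  change scal with Rmult in E. simpl in E. lra.
Qed.

Lemma PSeries_PS_exp (a : nat -> R) (r t : R) : Rbar_le r (CV_radius a) ->
  Rbar_le r (CV_radius (PS_exp a)) -> Rabs t < r -> PSeries (PS_exp a) t = exp (PSeries a t).
Proof.
  intros Ha Hs Ht.
  set (F y := PSeries (PS_exp a) y * exp (- PSeries a y)).
  (* F' = (s' - a' s) exp (-a) = 0 *)
  assert (HF : forall y, Rabs y < r -> is_derive F y 0).
  { intros y Hy.
    assert (Hys : Rbar_lt (Rabs y) (CV_radius (PS_exp a))) by now apply (lt_CV_radius _ r).
    assert (Hya : Rbar_lt (Rabs y) (CV_radius a)) by now apply (lt_CV_radius _ r).
    assert (Hyd : Rbar_lt (Rabs y) (CV_radius (PS_derive a))) by now rewrite CV_radius_derive.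
    pose proof (is_derive_mult _ _ y _ _ (is_derive_PSeries _ y Hys)
      (is_derive_comp exp (fun y => - PSeries a y) y _ _ (is_derive_exp _)
        (@is_derive_opp R_AbsRing R_NormedModule _ _ _ (is_derive_PSeries a y Hya)))
      Rmult_comm) as D.
    rewrite (PSeries_ext _ _ _ (PS_derive_PS_exp a)), PSeries_mult in D by assumption.
    match type of D with is_derive _ _ ?d => replace 0 with d; [exact D|] end.
    change (mult ?u ?v) with (u * v). change (scal ?u ?v) with (u * v).
    change (plus ?u ?v) with (u + v). change (opp ?u) with (- u).
    match goal with |- ?u = _ => change (u = 0 :> R) end. ring. }
  pose proof (eq_of_is_derive_0 F r t HF Ht) as E. unfold F in E.
  rewrite !PSeries_0, PS_exp_eq in E. cbn [PS_exp_step] in E.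
  rewrite <- exp_plus, Rplus_opp_r, exp_0, exp_Ropp in E.
  pose proof (exp_pos (PSeries a t)).
  apply Rmult_eq_reg_r with (/ exp (PSeries a t)); [| apply Rinv_neq_0_compat; lra].
  rewrite E, Rinv_r by lra. reflexivity.
Qed.

Lemma analytic_at_exp (lam : R) (f : R -> R) (x0 : R) :
  analytic_at lam f x0 -> analytic_at lam (fun x => exp (f x)) x0.
Proof.
  intros (a & r & Hr & Ha & Heq).
  destruct (CV_radius_PS_exp a) as (rs & Hrs & Hs); [now apply Rbar_lt_le_trans with r|].
  pose proof (Rmin_l r rs). pose proof (Rmin_r r rs). set (r' := Rmin r rs) in *.
  assert (Ha' : Rbar_le r' (CV_radius a)) by (apply Rbar_le_trans with r; [simpl; lra| exact Ha]).
  assert (Hs' : Rbar_le r' (CV_radius (PS_exp a)))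
    by (apply Rbar_le_trans with rs; [simpl; lra| exact Hs]).
  exists (PS_exp a), r'. repeat split; [now apply Rmin_glb_lt| exact Hs'|].
  intros x Hx Hxr. rewrite Heq by (auto; lra). symmetry. now apply (PSeries_PS_exp a r').
Qed.

(** * tau maps K into K *)

Section Tau_maps_K.
Variables (lam beta : R) (h : R -> R).
Hypotheses (Hl : 0 < lam) (Hb : 0 <= beta) (Hh : inK lam h).

Lemma Psi_bounds (x : R) : 0 <= x <= lam -> 1 <= Psi beta h x <= 1 + beta.
Proof.
  intros Hx. destruct (proj2 Hh x Hx) as [H0 H1].
  rewrite Rabs_pos_eq in H1 by exact H0. unfold Psi. nra.
Qed.

Lemma analytic_at_inv_Psi (y : R) : 0 <= y <= lam -> analytic_at lam (fun x => / Psi beta h x) y.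
Proof.
  intros Hy. apply analytic_at_inv; [exact Hy| |].
  - apply analytic_at_plus; [apply analytic_at_const| apply analytic_at_scal].
    apply analytic_at_of_analytic_on; [exact Hl| apply Hh| exact Hy].
  - pose proof (Psi_bounds y Hy). lra.
Qed.

Lemma analytic_at_xi_div_Psi (y : R) : 0 <= y <= lam ->
  analytic_at lam (fun xi => xi / Psi beta h xi) y.
Proof.
  intros Hy. apply analytic_at_mult; [apply analytic_at_id; lra| now apply analytic_at_inv_Psi].
Qed.

Lemma analytic_at_G (y : R) : 0 <= y <= lam -> analytic_at lam (G beta h) y.
Proof.
  intros Hy. apply analytic_at_mult; [| now apply analytic_at_inv_Psi].
  apply analytic_at_exp, analytic_at_scal, analytic_at_RInt; [lra| | exact Hy].
  apply analytic_at_xi_div_Psi.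
Qed.

Lemma ex_RInt_G (a b : R) : 0 <= a <= lam -> 0 <= b <= lam -> ex_RInt (G beta h) a b.
Proof. apply ex_RInt_analytic; [lra| apply analytic_at_G]. Qed.

Lemma ex_RInt_xi_div_Psi (a b : R) : 0 <= a <= lam -> 0 <= b <= lam ->
  ex_RInt (fun xi => xi / Psi beta h xi) a b.
Proof. apply ex_RInt_analytic; [lra| apply analytic_at_xi_div_Psi]. Qed.

Lemma RInt_G_ge0 (a b : R) : 0 <= a <= b -> b <= lam -> 0 <= RInt (G beta h) a b.
Proof.
  intros Ha Hb'. apply RInt_ge_0; [lra| apply ex_RInt_G; lra|].
  intros x Hx. pose proof (Psi_bounds x ltac:(lra)). unfold G.
  apply Rlt_le, Rmult_lt_0_compat; [apply exp_pos| apply Rinv_0_lt_compat; lra].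
Qed.

Lemma tau_eq (gamma x : R) : 0 < gamma -> 0 <= x <= lam ->
  tau gamma lam beta h x = (1 + gamma * RInt (G beta h) 0 x) /
     (1 + gamma * (RInt (G beta h) 0 x + RInt (G beta h) x lam)).
Proof.
  intros Hg Hx. unfold tau, Defs.D.
  rewrite <- (RInt_Chasles (G beta h) 0 x lam) by (apply ex_RInt_G; lra).
  pose proof (RInt_G_ge0 0 x ltac:(lra) ltac:(lra)).
  pose proof (RInt_G_ge0 x lam ltac:(lra) ltac:(lra)).
  change plus with Rplus. field. split; apply Rgt_not_eq; nra.
Qed.

Lemma tau_inK (gamma : R) : 0 < gamma -> inK lam (tau gamma lam beta h).
Proof.
  intros Hg.
  assert (Hrange : forall x, 0 <= x <= lam -> 0 <= tau gamma lam beta h x <= 1).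
  { intros x Hx. rewrite tau_eq by assumption.
    pose proof (RInt_G_ge0 0 x ltac:(lra) ltac:(lra)).
    pose proof (RInt_G_ge0 x lam ltac:(lra) ltac:(lra)).
    split; [apply Rmult_le_pos; [nra| apply Rlt_le, Rinv_0_lt_compat; nra]|].
    apply Rmult_le_reg_r with (1 + gamma * (RInt (G beta h) 0 x + RInt (G beta h) x lam)); [nra|].
    unfold Rdiv. rewrite Rmult_assoc, Rinv_l by nra. nra. }
  split; [split|].
  - apply analytic_on_of_analytic_at. intros x0 Hx0.
    apply analytic_at_scal, analytic_at_plus; [apply analytic_at_const|].
    apply analytic_at_RInt; [lra| apply analytic_at_G| exact Hx0].
  - exists 1. intros x Hx. rewrite Rabs_pos_eq; apply Hrange; assumption.
  - intros x Hx. rewrite Rabs_pos_eq; apply Hrange; assumption.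
Qed.

End Tau_maps_K.

(** * The contraction estimate *)

Lemma exp_le_compat (x y : R) : x <= y -> exp x <= exp y.
Proof. intros [H| ->]; [apply Rlt_le, exp_increasing, H| lra]. Qed.

Lemma exp_lipschitz (p q m : R) : p <= m -> q <= m ->
  Rabs (exp p - exp q) <= exp m * Rabs (p - q).
Proof.
  assert (Key : forall u v, v <= u -> u <= m -> exp u - exp v <= exp m * (u - v)).
  { intros u v Hvu Hum.
    replace (exp v) with (exp u * exp (v - u)) by (rewrite <- exp_plus; f_equal; ring).
    pose proof (exp_ineq1_le (v - u)). pose proof (exp_pos u). pose proof (exp_le_compat u m Hum).
    nra. }
  intros Hp Hq. destruct (Rle_dec q p) as [H|H].
  - pose proof (Key p q H Hp). pose proof (exp_le_compat q p H).
    rewrite !Rabs_pos_eq by lra. lra.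
  - pose proof (Key q p ltac:(lra) Hq). pose proof (exp_le_compat p q ltac:(lra)).
    rewrite Rabs_minus_sym, (Rabs_minus_sym p q), !Rabs_pos_eq by lra. lra.
Qed.

Lemma is_RInt_linear (c x : R) : is_RInt (fun t => c * t) 0 x (c * x * x / 2).
Proof.
  assert (H : is_RInt (fun t => c * t) 0 x (minus (c * x * x / 2) (c * 0 * 0 / 2))).
  { apply (@is_RInt_derive R_CompleteNormedModule (fun t => c * t * t / 2)).
    - intros t _. auto_derive; [trivial| field].
    - intros t _. apply (@ex_derive_continuous R_AbsRing R_NormedModule). auto_derive. trivial. }
  unfold minus, plus, opp in H; simpl in H.
  replace (c * x * x / 2) with (c * x * x / 2 + - (c * 0 * 0 / 2)) by field. exact H.
Qed.

Lemma Rabs_RInt_le (f g : R -> R) (a b : R) : a <= b -> ex_RInt f a b -> ex_RInt g a b ->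
  (forall x, a <= x <= b -> Rabs (f x) <= g x) -> Rabs (RInt f a b) <= RInt g a b.
Proof.
  intros Hab Hf Hg H. apply (norm_RInt_le f g a b); [exact Hab| exact H| |];
    now apply (@RInt_correct R_CompleteNormedModule).
Qed.

Definition potential (beta : R) (h : R -> R) (x : R) : R :=
  RInt (fun xi => xi / Psi beta h xi) 0 x.

Definition gauss_weight (a x : R) : R := exp (- (x * x) / a) * (1 + x * x).

Lemma ex_RInt_gauss_weight (a u v : R) : 0 < a -> ex_RInt (gauss_weight a) u v.
Proof.
  intros Ha. apply (@ex_RInt_continuous R_CompleteNormedModule). intros x _.
  apply (@ex_derive_continuous R_AbsRing R_NormedModule). unfold gauss_weight. auto_derive. lra.
Qed.

(* exp (-x^2/a) <= exp (1 - 2 x / sqrt a) as (x - sqrt a)^2 >= 0; integrating this majorant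
   and integrating x^2 exp (-x^2/a) by parts gives the antiderivative bound Phi, and e <= 3. *)
Lemma RInt_gauss_weight_le (a lam : R) : 0 < a -> 0 <= lam ->
  RInt (gauss_weight a) 0 lam <= 3 / 2 * (1 + a / 2) * sqrt a.
Proof.
  intros Ha Hl. set (s := sqrt a).
  assert (Hs : 0 < s) by (apply sqrt_lt_R0, Ha).
  assert (Hss : s * s = a) by (apply sqrt_sqrt; lra).
  set (Phi x := - (1 + a / 2) * (s / 2) * exp (1 - 2 * x / s) - (a * x / 2) * exp (- (x * x) / a)).
  set (dPhi x := (1 + a / 2) * exp (1 - 2 * x / s) - (a / 2) * exp (- (x * x) / a)
                 + x * x * exp (- (x * x) / a)).
  assert (HI : is_RInt dPhi 0 lam (minus (Phi lam) (Phi 0))).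
  { apply (@is_RInt_derive R_CompleteNormedModule).
    - intros x _. unfold Phi, dPhi. auto_derive; [lra|].
      change (- (x * x) * / a) with (- (x * x) / a).
      change (1 + - (2 * x * / s)) with (1 - 2 * x / s).
      field. lra.
    - intros x _. apply (@ex_derive_continuous R_AbsRing R_NormedModule). unfold dPhi.
      auto_derive. lra. }
  apply Rle_trans with (RInt dPhi 0 lam).
  - apply RInt_le; [exact Hl| now apply ex_RInt_gauss_weight| eexists; exact HI|].
    intros x _. unfold gauss_weight, dPhi.
    assert (exp (- (x * x) / a) <= exp (1 - 2 * x / s)).
    { apply exp_le_compat.
      assert (E : 1 - 2 * x / s - (- (x * x) / a) = (x - s) * (x - s) / a)
        by (rewrite <- Hss; field; lra).
      assert (0 <= (x - s) * (x - s) / a)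
        by (apply Rmult_le_pos; [apply Rle_0_sqr| apply Rlt_le, Rinv_0_lt_compat, Ha]).
      lra. }
    nra.
  - rewrite (is_RInt_unique _ _ _ _ HI). unfold minus, plus, opp, Phi. simpl.
    replace (1 - 2 * 0 / s) with 1 by (field; lra).
    pose proof exp_le_3. pose proof (exp_pos (1 - 2 * lam / s)).
    pose proof (exp_pos (- (lam * lam) / a)).
    assert (0 <= a * lam / 2) by (apply Rmult_le_pos; [apply Rmult_le_pos|]; lra).
    assert (0 <= (1 + a / 2) * (s / 2)) by (apply Rmult_le_pos; lra).
    nra.
Qed.

Lemma Rabs_ratio_diff_le (g A1 A2 R1 R2 : R) : 0 < g -> 0 <= A1 -> 0 <= A2 -> 0 <= R1 -> 0 <= R2 ->
  Rabs ((1 + g * A1) / (1 + g * (A1 + R1)) - (1 + g * A2) / (1 + g * (A2 + R2)))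
    <= g * (Rabs (A1 - A2) + Rabs (R1 - R2)).
Proof.
  intros Hg HA1 HA2 HR1 HR2.
  assert (HD1 : 1 <= 1 + g * (A1 + R1)) by nra. assert (HD2 : 1 <= 1 + g * (A2 + R2)) by nra.
  replace ((1 + g * A1) / (1 + g * (A1 + R1)) - (1 + g * A2) / (1 + g * (A2 + R2)))
    with (g * ((A1 - A2) * (g * R2) - (R1 - R2) * (1 + g * A2))
          / ((1 + g * (A1 + R1)) * (1 + g * (A2 + R2)))) by (field; lra).
  set (D1 := 1 + g * (A1 + R1)) in *. set (D2 := 1 + g * (A2 + R2)) in *.
  unfold Rdiv. rewrite Rabs_mult, Rabs_inv, (Rabs_pos_eq (D1 * D2)) by nra.
  apply Rmult_le_reg_r with (D1 * D2); [nra|].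
  rewrite Rmult_assoc, Rinv_l, Rmult_1_r by nra.
  rewrite Rabs_mult, (Rabs_pos_eq g) by lra.
  assert (HN : Rabs ((A1 - A2) * (g * R2) - (R1 - R2) * (1 + g * A2))
               <= (Rabs (A1 - A2) + Rabs (R1 - R2)) * D2).
  { eapply Rle_trans; [apply Rabs_triang|].
    rewrite Rabs_Ropp, (Rabs_mult (A1 - A2)), (Rabs_mult (R1 - R2)).
    rewrite (Rabs_pos_eq (g * R2)), (Rabs_pos_eq (1 + g * A2)) by nra.
    pose proof (Rabs_pos (A1 - A2)). pose proof (Rabs_pos (R1 - R2)).
    assert (g * R2 <= D2) by (unfold D2; nra). assert (1 + g * A2 <= D2) by (unfold D2; nra).
    nra. }
  rewrite Rmult_assoc. apply Rmult_le_compat_l; [lra|].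
  eapply Rle_trans; [exact HN|].
  pose proof (Rabs_pos (A1 - A2)). pose proof (Rabs_pos (R1 - R2)).
  assert (0 <= (Rabs (A1 - A2) + Rabs (R1 - R2)) * D2) by nra.
  nra.
Qed.

Section Lipschitz_estimates.
Variables (lam beta : R) (h1 h2 : R -> R) (M : R).
Hypotheses (Hl : 0 < lam) (Hb : 0 <= beta) (Hh1 : inK lam h1) (Hh2 : inK lam h2)
  (HM : forall x, 0 <= x <= lam -> Rabs (h1 x - h2 x) <= M).

Lemma inv_Psi_diff (x : R) : 0 <= x <= lam ->
  Rabs (/ Psi beta h1 x - / Psi beta h2 x) <= beta * M.
Proof.
  intros Hx.
  pose proof (Psi_bounds lam beta h1 Hb Hh1 x Hx). pose proof (Psi_bounds lam beta h2 Hb Hh2 x Hx).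
  replace (/ Psi beta h1 x - / Psi beta h2 x)
    with (beta * (h2 x - h1 x) * / (Psi beta h1 x * Psi beta h2 x))
    by (unfold Psi in *; field; lra).
  assert (Hi : 0 < / (Psi beta h1 x * Psi beta h2 x) <= 1).
  { split; [apply Rinv_0_lt_compat; nra| rewrite <- Rinv_1; apply Rinv_le_contravar; nra]. }
  rewrite !Rabs_mult, Rabs_minus_sym, (Rabs_pos_eq beta), (Rabs_pos_eq (/ _)), Rmult_assoc by lra.
  apply Rmult_le_compat_l; [exact Hb|].
  pose proof (HM x Hx). pose proof (Rabs_pos (h1 x - h2 x)). nra.
Qed.

Lemma potential_lower (h : R -> R) (x : R) : inK lam h -> 0 <= x <= lam ->
  x * x / (2 * (1 + beta)) <= potential beta h x.
Proof.
  intros Hh Hx.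
  replace (x * x / (2 * (1 + beta))) with (/ (1 + beta) * x * x / 2) by (field; lra).
  rewrite <- (is_RInt_unique _ _ _ _ (is_RInt_linear _ x)).
  apply RInt_le; [lra| eexists; apply is_RInt_linear| apply (ex_RInt_xi_div_Psi lam); auto; lra|].
  intros t Ht. pose proof (Psi_bounds lam beta h Hb Hh t ltac:(lra)).
  unfold Rdiv. rewrite Rmult_comm. apply Rmult_le_compat_l; [lra| apply Rinv_le_contravar; lra].
Qed.

Lemma potential_diff (x : R) : 0 <= x <= lam ->
  Rabs (potential beta h1 x - potential beta h2 x) <= beta * M * x * x / 2.
Proof.
  intros Hx. unfold potential.
  rewrite <- (@RInt_minus R_CompleteNormedModule) by (apply (ex_RInt_xi_div_Psi lam); auto; lra).
  rewrite <- (is_RInt_unique _ _ _ _ (is_RInt_linear (beta * M) x)).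
  apply Rabs_RInt_le; [lra| | eexists; apply is_RInt_linear|].
  - apply (@ex_RInt_minus R_NormedModule); apply (ex_RInt_xi_div_Psi lam); auto; lra.
  - intros t Ht. unfold Rdiv. rewrite <- Rmult_minus_distr_l, Rabs_mult, Rabs_pos_eq by lra.
    pose proof (inv_Psi_diff t ltac:(lra)). nra.
Qed.

Lemma G_diff (x : R) : 0 <= x <= lam ->
  Rabs (G beta h1 x - G beta h2 x) <= beta * M * gauss_weight (1 + beta) x.
Proof.
  intros Hx. unfold G, gauss_weight. fold (potential beta h1 x) (potential beta h2 x).
  set (E1 := exp (-2 * potential beta h1 x)). set (E2 := exp (-2 * potential beta h2 x)).
  set (m := - (x * x) / (1 + beta)).
  assert (Hm : m = -2 * (x * x / (2 * (1 + beta)))) by (unfold m; field; lra).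
  pose proof (potential_lower h1 x Hh1 Hx). pose proof (potential_lower h2 x Hh2 Hx).
  assert (HE : Rabs (E1 - E2) <= exp m * (beta * M * (x * x))).
  { eapply Rle_trans; [apply (exp_lipschitz _ _ m); rewrite Hm; lra|].
    apply Rmult_le_compat_l; [apply Rlt_le, exp_pos|].
    replace (-2 * potential beta h1 x - -2 * potential beta h2 x)
      with (-2 * (potential beta h1 x - potential beta h2 x)) by ring.
    rewrite Rabs_mult, Rabs_left by lra. pose proof (potential_diff x Hx). lra. }
  assert (HE2 : 0 < E2 <= exp m) by (split; [apply exp_pos| apply exp_le_compat; rewrite Hm; lra]).
  pose proof (Psi_bounds lam beta h1 Hb Hh1 x Hx).
  assert (HP1 : 0 < / Psi beta h1 x <= 1).
  { split; [apply Rinv_0_lt_compat; lra| rewrite <- Rinv_1; apply Rinv_le_contravar; lra]. }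
  pose proof (inv_Psi_diff x Hx).
  unfold Rdiv.
  replace (E1 * / Psi beta h1 x - E2 * / Psi beta h2 x)
    with ((E1 - E2) * / Psi beta h1 x + E2 * (/ Psi beta h1 x - / Psi beta h2 x)) by ring.
  eapply Rle_trans; [apply Rabs_triang|].
  rewrite !Rabs_mult, (Rabs_pos_eq (/ _)), (Rabs_pos_eq E2) by lra.
  pose proof (Rabs_pos (E1 - E2)). pose proof (Rabs_pos (/ Psi beta h1 x - / Psi beta h2 x)).
  pose proof (exp_pos m).
  assert (Rabs (E1 - E2) * / Psi beta h1 x <= exp m * (beta * M * (x * x))) by nra.
  assert (E2 * Rabs (/ Psi beta h1 x - / Psi beta h2 x) <= exp m * (beta * M)) by nra.
  nra.
Qed.

Lemma RInt_G_diff (u v : R) : 0 <= u <= v -> v <= lam ->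
  Rabs (RInt (G beta h1) u v - RInt (G beta h2) u v)
    <= beta * M * RInt (gauss_weight (1 + beta)) u v.
Proof.
  intros Hu Hv.
  rewrite <- (@RInt_minus R_CompleteNormedModule) by (apply (ex_RInt_G lam); auto; lra).
  rewrite <- (@RInt_scal R_CompleteNormedModule) by (apply ex_RInt_gauss_weight; lra).
  apply Rabs_RInt_le; [lra| | |].
  - apply (@ex_RInt_minus R_NormedModule); apply (ex_RInt_G lam); auto; lra.
  - apply (@ex_RInt_scal R_NormedModule), ex_RInt_gauss_weight. lra.
  - intros t Ht. apply G_diff. lra.
Qed.

Lemma tau_lipschitz (gamma x : R) : 0 < gamma -> 0 <= x <= lam ->
  Rabs (tau gamma lam beta h1 x - tau gamma lam beta h2 x)
    <= gamma * beta * M * RInt (gauss_weight (1 + beta)) 0 lam.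
Proof.
  intros Hg Hx. rewrite !(tau_eq lam) by assumption.
  eapply Rle_trans; [apply Rabs_ratio_diff_le; try assumption;
    apply (RInt_G_ge0 lam); auto; lra|].
  rewrite <- (@RInt_Chasles R_CompleteNormedModule _ 0 x lam) by (apply ex_RInt_gauss_weight; lra).
  pose proof (RInt_G_diff 0 x ltac:(lra) ltac:(lra)).
  pose proof (RInt_G_diff x lam ltac:(lra) ltac:(lra)).
  change plus with Rplus. nra.
Qed.

End Lipschitz_estimates.

Lemma contraction_factor_lt_1 (gamma beta1 beta : R) : 0 < gamma -> 0 < beta1 ->
  sqrt PI / 2 * gamma * beta1 * sqrt (1 + beta1) * (3 + beta1) = 1 -> 0 <= beta < beta1 ->
  gamma * beta * (3 / 2 * (1 + (1 + beta) / 2) * sqrt (1 + beta)) < 1.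
Proof.
  intros Hg Hb1 Hbeta1 Hb.
  assert (Hpi : 3 / 2 <= sqrt PI).
  { rewrite <- (sqrt_square (3 / 2)) by lra. apply sqrt_le_1_alt.
    pose proof PI2_3_2. lra. }
  assert (Hs : sqrt (1 + beta) <= sqrt (1 + beta1)) by (apply sqrt_le_1_alt; lra).
  pose proof (sqrt_pos (1 + beta)).
  assert (Hmono : beta * (3 + beta) * sqrt (1 + beta) < beta1 * (3 + beta1) * sqrt (1 + beta1)).
  { assert (0 < sqrt (1 + beta1)) by (apply sqrt_lt_R0; lra).
    apply Rle_lt_trans with (beta * (3 + beta) * sqrt (1 + beta1)); [apply Rmult_le_compat_l; nra|].
    apply Rmult_lt_compat_r; nra. }
  replace (gamma * beta * (3 / 2 * (1 + (1 + beta) / 2) * sqrt (1 + beta)))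
    with (3 / 4 * gamma * (beta * (3 + beta) * sqrt (1 + beta))) by field.
  apply Rlt_le_trans with (sqrt PI / 2 * gamma * (beta1 * (3 + beta1) * sqrt (1 + beta1)));
    [| right; transitivity (sqrt PI / 2 * gamma * beta1 * sqrt (1 + beta1) * (3 + beta1));
       [ring| exact Hbeta1]].
  assert (0 <= beta * (3 + beta) * sqrt (1 + beta)) by (apply Rmult_le_pos; nra).
  apply Rle_lt_trans with (sqrt PI / 2 * gamma * (beta * (3 + beta) * sqrt (1 + beta))).
  - apply Rmult_le_compat_r; [lra|]. apply Rmult_le_compat_r; lra.
  - apply Rmult_lt_compat_l; [nra| exact Hmono].
Qed.

Theorem theorem3p6 (lambda gamma beta1 beta : R)
  (Hlambda : 0 < lambda) (Hgamma : 0 < gamma)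
  (Hbeta1_pos : 0 < beta1)
  (Hbeta1 : sqrt PI / 2 * gamma * beta1 * sqrt (1 + beta1) * (3 + beta1) = 1)
  (Hbeta : 0 <= beta < beta1) :
  (forall h, inK lambda h -> inK lambda (tau gamma lambda beta h)) /\
  exists k, 0 <= k < 1 /\
    forall h1 h2, inK lambda h1 -> inK lambda h2 ->
      forall M, (forall x, 0 <= x <= lambda -> Rabs (h1 x - h2 x) <= M) ->
      forall x, 0 <= x <= lambda ->
        Rabs (tau gamma lambda beta h1 x - tau gamma lambda beta h2 x) <= k * M.
Proof.
  split; [intros h Hh; apply tau_inK; auto; lra|].
  set (C := 3 / 2 * (1 + (1 + beta) / 2) * sqrt (1 + beta)).
  assert (HC : 0 <= C) by (unfold C; pose proof (sqrt_pos (1 + beta)); apply Rmult_le_pos; lra).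
  exists (gamma * beta * C). split; [split; [apply Rmult_le_pos; nra|]|].
  { now apply (contraction_factor_lt_1 gamma beta1 beta). }
  intros h1 h2 Hh1 Hh2 M HM x Hx.
  assert (HM0 : 0 <= M) by (pose proof (HM 0 ltac:(lra)); pose proof (Rabs_pos (h1 0 - h2 0)); lra).
  eapply Rle_trans; [apply (tau_lipschitz lambda); auto; lra|].
  pose proof (RInt_gauss_weight_le (1 + beta) lambda ltac:(lra) ltac:(lra)) as Hw. fold C in Hw.
  assert (0 <= gamma * beta * M) by (apply Rmult_le_pos; nra).
  nra.
Qed.
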